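(* Let $0<\alpha<\beta<1$, let $\theta_1\in[0,1)$ and let $F_1\subset V(\theta_1)$ be a linear subspace with $\dim F_1=k$. For every $\varepsilon>0$ there exists $\delta>0$ such that for every $\theta_2\in[0,1)$ with $|\theta_2-\theta_1|\le\delta$ there exists a linear subspace $F_2\subset V(\theta_2)$ with $\dim F_2=k$ and $\max\{\mathrm{dist}(F_1,F_2),\mathrm{dist}(F_2,F_1)\}<\varepsilon$.
   Context: $Q=(0,1)$, $Q_1=(0,\alpha)\cup(\beta,1)$. Let $p$ be a $1$-periodic measurable function with $p>0$, $p,p^{-1}\in L^\infty(0,1)$. For $\theta\in[0,1)$, $H^1_\theta(Q)=\{u\in H^1(0,1):u(1)=e^{2\pi i\theta}u(0)\}$ and $V(\theta)=\{v\in H^1_\theta(Q):p v'=0\text{ a.e. on }Q_1\}$. For linear subspaces $N,M$ of $H^1(0,1)$, $\mathrm{dist}(N,M):=\sup_{u\in N,\ \|u\|_{H^1}=1}\ \inf_{v\in M}\|u-v\|_{H^1}$. *)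

From HB Require Import structures.
From mathcomp Require Import all_boot all_order all_algebra.
From mathcomp Require Import all_classical all_reals all_analysis.
From mathcomp Require complex.
Import complex.ComplexField.
Set Implicit Arguments. Unset Strict Implicit. Unset Printing Implicit Defensive.
Import Order.TTheory GRing.Theory Num.Theory.
Import numFieldNormedType.Exports.
Local Open Scope classical_set_scope.
Local Open Scope ring_scope.

Section Defs.
Variable R : realType.

Notation C := (complex.complex R).
Notation mu := (@lebesgue_measure R).
Definition I01 : set R := `[0, 1].

Definition ReF (f : R -> C) : R -> R := fun x => complex.Re (f x).
Definition ImF (f : R -> C) : R -> R := fun x => complex.Im (f x).

Definition L2r (f : R -> R) : Prop :=
  measurable_fun I01 f /\
  mu.-integrable I01 (fun x => ((f x) ^+ 2)%:E).

Definition L2c (g : R -> C) : Prop := L2r (ReF g) /\ L2r (ImF g).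

(* g is (a representative of) the weak derivative of u and u is in H^1(0,1),
   u being identified with its continuous representative on [0,1]:
   u(x) = u(0) + \int_0^x g  for x in [0,1], with g in L^2(0,1). *)
Definition H1_deriv (u g : R -> C) : Prop :=
  L2c g /\
  forall x, x \in `[0, 1] ->
    ReF u x = ReF u 0 + Rintegral mu (`[0, x] : set R) (ReF g) /\
    ImF u x = ImF u 0 + Rintegral mu (`[0, x] : set R) (ImF g).

Definition H1 (u : R -> C) : Prop := exists g, H1_deriv u g.

(* The H^1(0,1) norm: (\int_0^1 |u|^2 + |u'|^2)^{1/2}; the weak derivative is
   unique a.e., so the set below is a singleton for u in H^1. *)
Definition H1norm (u : R -> C) : R :=
  sup [set r | exists g, H1_deriv u g /\
     r = Num.sqrt (Rintegral mu I01
           (fun x => ReF u x ^+ 2 + ImF u x ^+ 2 + ReF g x ^+ 2 + ImF g x ^+ 2))].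

Definition expi2pi (t : R) : C :=
  complex.Complex (cos (2 * pi * t)) (sin (2 * pi * t)).

Definition H1theta (t : R) (u : R -> C) : Prop := H1 u /\ u 1 = expi2pi t * u 0.

Definition Q1 (a b : R) : set R := (`]0, a[ : set R) `|` (`]b, 1[ : set R).

Definition Vth (p : R -> R) (a b t : R) (v : R -> C) : Prop :=
  H1theta t v /\
  exists g, H1_deriv v g /\
    {ae mu, forall x, Q1 a b x -> complex.Complex (p x) 0 * g x = 0}.

Definition span_on (k : nat) (b : 'I_k -> R -> C) : set (R -> C) :=
  [set u | exists c : 'I_k -> C, forall x, x \in `[0, 1] ->
             u x = \sum_(i < k) c i * b i x].

Definition lin_indep_on (k : nat) (b : 'I_k -> R -> C) : Prop :=
  forall c : 'I_k -> C,
    (forall x, x \in `[0, 1] -> \sum_(i < k) c i * b i x = 0) ->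
    forall i, c i = 0.

Definition subspace_dim (F : set (R -> C)) (k : nat) : Prop :=
  exists b : 'I_k -> R -> C, lin_indep_on b /\ F = span_on b.

Definition dist (N M : set (R -> C)) : R :=
  sup [set d | exists u, N u /\ H1norm u = 1 /\
         d = inf [set e | exists v, M v /\ e = H1norm (u - v)]].

Definition coeff_ok (p : R -> R) : Prop :=
  measurable_fun setT p /\
  (forall x, p (x + 1) = p x) /\
  (forall x, 0 < p x) /\
  (exists M : R, {ae mu, forall x, x \in `]0, 1[ -> `|p x| <= M}) /\
  (exists M : R, {ae mu, forall x, x \in `]0, 1[ -> `|(p x)^-1| <= M}).

End Defs.

From HB Require Import structures.
From mathcomp Require Import all_boot all_order all_algebra.
From mathcomp Require Import all_classical all_reals all_analysis.
From mathcomp Require complex.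
From mathcomp Require Import ring lra measurable_realfun.
Import complex.ComplexField.
Import Order.TTheory GRing.Theory Num.Theory.
Import numFieldNormedType.Exports.
Local Open Scope classical_set_scope.
Local Open Scope ring_scope.

(* If [u] lies in V(theta1), then [u + (e(theta2) - e(theta1)) u(0) h] lies in
   V(theta2), where e(t) = exp(2 pi i t) and [h] is the ramp rising linearly from 0
   to 1 on (alpha, beta): [h'] vanishes on Q1, so the constraint on Q1 is untouched,
   while the boundary factor u(1)/u(0) moves from e(theta1) to e(theta2). Mapping a
   basis of F1 in this way gives F2. The perturbation has H1 norm at most
   |e(theta2) - e(theta1)| |u(0)| |h|_H1, and [u] is constant on (0, alpha), so
   alpha |u(0)|^2 <= |u|_H1^2; both distances are therefore
   O(|e(theta2) - e(theta1)|). *)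

Section Quasiperiodic_H1.
Context {R : realType}.
Notation C := (complex.complex R).
Notation mu := (@lebesgue_measure R).
Notation T := (measurableTypeR R).

Lemma measurable_I01 : measurable (@I01 R : set T).
Proof. exact: measurable_itv. Qed.

Lemma lebesgue_measure_I01 : mu (@I01 R) = 1%E.
Proof. by rewrite /I01 lebesgue_measure_itv/= lte_fin ltr01 -EFinD subr0. Qed.

Lemma I01P (x : R) : @I01 R x <-> 0 <= x <= 1.
Proof. by rewrite /I01 /= in_itv. Qed.

Lemma bounded_integrable_I01 {f : R -> R} (M : R) :
  measurable_fun (@I01 R) f -> (forall x, @I01 R x -> `|f x| <= M) ->
  mu.-integrable (@I01 R) (EFin \o f).
Proof.
move=> mf fM; apply: (@measurable_bounded_integrable _ _ _ mu) => //.
- exact: measurable_I01.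
- by have := ltry (1 : R); rewrite -lebesgue_measure_I01.
- exists M; split; first exact: num_real.
  by move=> N MN x /fM /le_trans; apply; exact: ltW.
Qed.

Lemma integrable_cst_I01 (c : R) : mu.-integrable (@I01 R) (EFin \o cst c).
Proof. by apply: (bounded_integrable_I01 `|c|) => //; exact: measurable_cst. Qed.

Lemma L2r_integrable {f : R -> R} : L2r f -> mu.-integrable (@I01 R) (EFin \o f).
Proof.
move=> [mf intf].
have abs_le x : `|f x| <= 1 + f x ^+ 2.
  have := normr_ge0 (f x); rewrite -real_normK ?num_real //; set n := `|f x|; nra.
apply: (@le_integrable _ _ _ mu _ measurable_I01 _ (fun x => (1 + f x ^+ 2)%:E)).
- exact/measurable_EFinP.
- by move=> x _ /=; rewrite !lee_fin (le_trans (abs_le x)) // ler_norm.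
- apply: (eq_integrable measurable_I01 _ _ _
    (integrableD measurable_I01 (integrable_cst_I01 1) intf)).
  by move=> x _ /=; rewrite EFinD.
Qed.

Lemma bounded_L2r {f : R -> R} (M : R) : measurable_fun (@I01 R) f ->
  (forall x, @I01 R x -> `|f x| <= M) -> L2r f.
Proof.
move=> mf fM; split => //.
apply: (bounded_integrable_I01 (M ^+ 2)); first exact: measurable_funX.
move=> x /fM fxM; rewrite normrX.
by apply: lerXn2r; rewrite // nnegrE (le_trans _ fxM).
Qed.

Lemma L2rD {f g : R -> R} : L2r f -> L2r g -> L2r (fun x => f x + g x).
Proof.
move=> [mf If] [mg Ig]; split; first exact: measurable_funD.
apply: (@le_integrable _ _ _ mu _ measurable_I01 _
  (fun x : T => (2 * f x ^+ 2 + 2 * g x ^+ 2)%:E)).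
- by apply/measurable_EFinP; apply: measurable_funX; exact: measurable_funD.
- move=> x _ /=; rewrite !lee_fin ger0_norm ?sqr_ge0 // ger0_norm; last first.
    by rewrite addr_ge0 // mulr_ge0 // sqr_ge0.
  have := sqr_ge0 (f x - g x); nra.
- apply: (eq_integrable measurable_I01 _ _ _ (integrableD measurable_I01
    (integrableZl measurable_I01 (2 : R) If) (integrableZl measurable_I01 (2 : R) Ig))).
  by move=> x _ /=; rewrite EFinD !EFinM.
Qed.

Lemma L2rZ (c : R) {f : R -> R} : L2r f -> L2r (fun x => c * f x).
Proof.
move=> [mf If]; split; first by apply: measurable_funM => //; exact: measurable_cst.
apply: (eq_integrable measurable_I01 _ _ _ (integrableZl measurable_I01 (c ^+ 2) If)).
by move=> x _ /=; rewrite -EFinM exprMn.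
Qed.

Lemma ge0_subset_Rintegral {A B : set T} {h : R -> R} : measurable A -> measurable B ->
  A `<=` B -> mu.-integrable B (EFin \o h) -> (forall x, B x -> 0 <= h x) ->
  Rintegral mu A h <= Rintegral mu B h.
Proof.
move=> mA mB AB iB h0.
have iA : mu.-integrable A (EFin \o h) by exact: integrableS iB.
rewrite /Rintegral fine_le //; [exact: integrable_fin_num|exact: integrable_fin_num|].
apply: ge0_subset_integral => //; first exact: (measurable_int mu iB).
all: by move=> x Bx; rewrite lee_fin h0.
Qed.

Lemma itv0_subset_I01 (x : R) : x <= 1 -> (`[0, x] : set R) `<=` @I01 R.
Proof.
move=> x1 y /=; rewrite /I01 /= !in_itv /= => /andP[-> yx] /=.
exact: le_trans yx x1.
Qed.

Lemma L2r_integrable_itv0 {g : R -> R} {x : R} : L2r g -> x <= 1 ->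
  mu.-integrable (`[0, x] : set T) (EFin \o g).
Proof.
move=> hg x1; apply: (integrableS _ _ _ (L2r_integrable hg)).
- exact: measurable_I01.
- exact: measurable_itv.
- exact: itv0_subset_I01.
Qed.

Lemma norm_Rintegral_itv0_le {g : R -> R} {x : R} : L2r g -> x <= 1 ->
  `|Rintegral mu (`[0, x] : set R) g| <= Rintegral mu (@I01 R) (fun t => `|g t|).
Proof.
move=> hg x1; apply: le_trans (le_normr_Rintegral _ _) _.
- exact: measurable_itv.
- exact: L2r_integrable_itv0.
apply: ge0_subset_Rintegral.
- exact: measurable_itv.
- exact: measurable_I01.
- exact: itv0_subset_I01.
- exact: integrable_norm (L2r_integrable hg).
- by move=> t _; exact: normr_ge0.
Qed.

Definition H1r_deriv (f g : R -> R) := L2r g /\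
  forall x, x \in `[0, 1] -> f x = f 0 + Rintegral mu (`[0, x] : set R) g.

Lemma H1r_deriv_L2r {f g : R -> R} : H1r_deriv f g -> L2r f.
Proof.
move=> [hg hf].
have mP : measurable_fun (`[0, 1] : set R) (fun x => parameterized_integral mu 0 x g).
  apply: subspace_continuous_measurable_fun => //.
  exact: parameterized_integral_continuous ler01 (L2r_integrable hg).
apply: (bounded_L2r (`|f 0| + Rintegral mu (@I01 R) (fun t => `|g t|))).
- have mf : measurable_fun (`[0, 1] : set R)
      (fun x => f 0 + parameterized_integral mu 0 x g).
    by apply: measurable_funD => //; exact: measurable_cst.
  apply: eq_measurable_fun mf => x xI.
  by rewrite [RHS]hf //; move: xI; rewrite inE.
- move=> x /I01P /andP[x0 x1]; rewrite hf ?in_itv /= ?x0 ?x1 //.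
  by rewrite (le_trans (ler_normD _ _)) // lerD2l norm_Rintegral_itv0_le.
Qed.

(* Lebesgue differentiation: the derivative of [x |-> \int_0^x d] is [d] a.e. *)
Lemma ae_eq0_of_Rintegral_itv0 {d : R -> R} : L2r d ->
  (forall x, x \in `[0, 1] -> Rintegral mu (`[0, x] : set R) d = 0) ->
  {ae mu, forall x, @I01 R x -> d x = 0}.
Proof.
move=> hd h0.
set f := d \_ (@I01 R).
have intT : mu.-integrable setT (EFin \o f).
  rewrite /f -restrict_EFin.
  apply/(integrable_restrict mu measurable_I01 (@measurableT _ T) _).1.
  by rewrite setTI; exact: L2r_integrable.
have intf y : mu.-integrable [set` Interval (BLeft (-1)) (BRight y)] (EFin \o f).
  by apply: (integrableS _ _ _ intT) => //; exact: measurable_itv.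
have locf : locally_integrable [set: R] f.
  exact: (integrable_locally measurable_I01 (L2r_integrable hd)).
have F0 : (fun x => \int[mu]_(t in [set` Interval (BLeft (-1)) (BRight x)]) f t)
    = cst 0.
  apply/funext => y /=; rewrite -Rintegral_mkcondr.
  have [y0|y0] := ltrP y 0.
    rewrite (_ : _ `&` _ = set0) ?Rintegral_set0 //.
    apply/seteqP; split => t //= [] /=.
    rewrite /I01 /= !in_itv /= => /andP[_ ty] /andP[t0 _].
    by have := le_lt_trans (le_trans t0 ty) y0; rewrite ltxx.
  rewrite (_ : _ `&` _ = `[0, Order.min y 1]%classic).
    by apply: h0; rewrite in_itv /= le_min y0 ler01 /= ge_min lexx orbT.
  apply/seteqP; split => t /=; rewrite /I01 /= !in_itv /= ?le_min.
    by move=> [/andP[_ ->] /andP[-> ->]].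
  move=> /andP[t0 /andP[-> ->]]; rewrite t0 andbT; split => //.
  by apply: le_trans t0; rewrite lerN10.
have := FTC1 intf locf.
apply: filterS; first exact: (ae_filter_ringOfSetsType mu).
move=> x hx /[dup] /I01P /andP[x0 _] Ix.
have [_ +] := hx (lt_le_trans (ltrN10 R) x0).
by rewrite F0 derive1_cst /f patchE mem_set // => <-.
Qed.

Lemma H1r_deriv_add_scale {f1 g1 f2 g2 : R -> R} (k : R) :
  H1r_deriv f1 g1 -> H1r_deriv f2 g2 ->
  H1r_deriv (fun x => f1 x + k * f2 x) (fun x => g1 x + k * g2 x).
Proof.
move=> [h1 e1] [h2 e2]; split; first by apply: L2rD => //; exact: L2rZ.
move=> x xI; have /andP[_ x1] := xI.
rewrite RintegralD; first last.
- exact: L2r_integrable_itv0 (L2rZ k h2) x1.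
- exact: L2r_integrable_itv0 h1 x1.
- exact: measurable_itv.
rewrite RintegralZl; first last.
- exact: L2r_integrable_itv0 h2 x1.
- exact: measurable_itv.
rewrite (e1 x xI) (e2 x xI); lra.
Qed.

Lemma H1r_derivZ {f g : R -> R} (k : R) :
  H1r_deriv f g -> H1r_deriv (fun x => k * f x) (fun x => k * g x).
Proof.
move=> [h e]; split; first exact: L2rZ.
move=> x xI; have /andP[_ x1] := xI.
rewrite RintegralZl; first last.
- exact: L2r_integrable_itv0 h x1.
- exact: measurable_itv.
by rewrite (e x xI) mulrDr.
Qed.

Lemma H1r_deriv_ae_unique {f g1 g2 : R -> R} : H1r_deriv f g1 -> H1r_deriv f g2 ->
  {ae mu, forall x, @I01 R x -> g1 x = g2 x}.
Proof.
move=> d1 d2; have [hd ed] := H1r_deriv_add_scale (-1) d1 d2.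
have := ae_eq0_of_Rintegral_itv0 hd.
have int0 x : x \in `[0, 1] ->
    Rintegral mu (`[0, x] : set R) (fun x => g1 x + (-1) * g2 x) = 0.
  by move=> /ed; lra.
move=> /(_ int0); apply: filterS; first exact: (ae_filter_ringOfSetsType mu).
by move=> x hx /hx; lra.
Qed.

Lemma H1r_deriv_cst_on {f g : R -> R} {a : R} : a <= 1 -> H1r_deriv f g ->
  {ae mu, forall y, `]0, a[%classic y -> g y = 0} ->
  forall x, 0 < x < a -> f x = f 0.
Proof.
move=> a1 [hg e] hae x /andP[x0 xa].
have x1 : x <= 1 by exact: le_trans (ltW xa) a1.
rewrite e ?in_itv /= ?(ltW x0) ?x1 // -Rintegral_itv_obnd_cbnd; last first.
  apply: (integrableS _ _ _ (L2r_integrable_itv0 hg x1)); try exact: measurable_itv.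
  by apply: subset_itvr; rewrite bnd_simp.
suff -> : \int[mu]_(t in [set` Interval (BRight 0) (BRight x)]) g t = 0.
  by rewrite addr0.
rewrite /Rintegral (@ae_eq_integral _ _ _ mu _ (cst 0%E) (fun y => (g y)%:E)).
- by rewrite integral0.
- exact: measurable_itv.
- apply/measurable_EFinP; apply: (measurable_funS measurable_I01 _ hg.1).
  by move=> t /=; rewrite /I01 /= !in_itv /= => /andP[/ltW -> /le_trans]; apply.
- exact: measurable_cst.
apply: filterS hae; first exact: (ae_filter_ringOfSetsType mu).
move=> y hy /=; rewrite in_itv /= => /andP[y0 yx].
by rewrite hy //= in_itv /= y0 (le_lt_trans yx xa).
Qed.

Lemma H1_derivP {u g : R -> C} :
  H1_deriv u g <-> H1r_deriv (ReF u) (ReF g) /\ H1r_deriv (ImF u) (ImF g).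
Proof.
split=> [[[hr hi] e]|[[hr er] [hi ei]]].
  by split; split => // x /e [].
by split=> // x xI; split; [exact: er | exact: ei].
Qed.

Lemma H1_deriv_eq_on {u v g : R -> C} :
  {in `[0, 1], u =1 v} -> H1_deriv u g -> H1_deriv v g.
Proof.
move=> uv [hg e]; split => // x xI.
have I0 : (0 : R) \in `[0, 1] by rewrite in_itv /= lexx ler01.
by rewrite /ReF /ImF -!uv //; exact: e.
Qed.

Definition sqnorm (z : C) : R := complex.Re z ^+ 2 + complex.Im z ^+ 2.

Lemma sqnorm_ge0 (z : C) : 0 <= sqnorm z.
Proof. by rewrite /sqnorm addr_ge0 // sqr_ge0. Qed.

Lemma sqnormM (z w : C) : sqnorm (z * w) = sqnorm z * sqnorm w.
Proof. by case: z => x y; case: w => x' y'; rewrite /sqnorm /=; ring. Qed.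

Lemma sqnormN (z : C) : sqnorm (- z) = sqnorm z.
Proof. by case: z => x y; rewrite /sqnorm /= !sqrrN. Qed.

Definition H1energy (u g : R -> C) : R := Rintegral mu (@I01 R)
  (fun x => ReF u x ^+ 2 + ImF u x ^+ 2 + ReF g x ^+ 2 + ImF g x ^+ 2).

Lemma H1energy_integrable {u g : R -> C} : H1_deriv u g -> mu.-integrable (@I01 R)
  (EFin \o (fun x => ReF u x ^+ 2 + ImF u x ^+ 2 + ReF g x ^+ 2 + ImF g x ^+ 2)).
Proof.
move=> /H1_derivP[r i].
have addI (f1 f2 : R -> R) : mu.-integrable (@I01 R) (EFin \o f1) ->
    mu.-integrable (@I01 R) (EFin \o f2) ->
    mu.-integrable (@I01 R) (EFin \o (fun x => f1 x + f2 x)).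
  move=> i1 i2.
  apply: (eq_integrable measurable_I01 _ _ _ (integrableD measurable_I01 i1 i2)).
  by move=> x _ /=; rewrite EFinD.
apply: (addI); [apply: (addI); [apply: (addI)|]|].
- exact: (H1r_deriv_L2r r).2.
- exact: (H1r_deriv_L2r i).2.
- exact: r.1.2.
- exact: i.1.2.
Qed.

Lemma H1energy_unique {u g1 g2 : R -> C} :
  H1_deriv u g1 -> H1_deriv u g2 -> H1energy u g1 = H1energy u g2.
Proof.
move=> h1 h2; rewrite /H1energy /Rintegral; congr fine.
apply: ae_eq_integral.
- exact: measurable_I01.
- exact: (measurable_int mu (H1energy_integrable h1)).
- exact: (measurable_int mu (H1energy_integrable h2)).
have [r1 i1] := H1_derivP.1 h1; have [r2 i2] := H1_derivP.1 h2.
apply: (filterS2 (ae_filter_ringOfSetsType mu) _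
  (H1r_deriv_ae_unique r1 r2) (H1r_deriv_ae_unique i1 i2)).
by move=> x hr hi Ix /=; rewrite hr // hi.
Qed.

Lemma H1normE {u g : R -> C} : H1_deriv u g -> H1norm u = Num.sqrt (H1energy u g).
Proof.
move=> h; rewrite /H1norm (_ : [set r | _] = [set Num.sqrt (H1energy u g)]) ?sup1 //.
apply/seteqP; split => r /=.
  by move=> [g' [h' ->]]; rewrite -(H1energy_unique h' h).
by move=> ->; exists g.
Qed.

Lemma H1norm_ge0 (u : R -> C) : 0 <= H1norm u.
Proof.
rewrite /H1norm; set S := [set r | _].
have [hs|hs] := pselect (has_sup S); last by rewrite sup_out.
have [r Sr] := hs.1; apply: le_trans (sup_upper_bound hs Sr).
by case: Sr => g [_ ->]; exact: sqrtr_ge0.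
Qed.

Lemma H1norm_eq_on {u v g : R -> C} : {in `[0, 1], u =1 v} ->
  H1_deriv u g -> H1norm v = Num.sqrt (H1energy u g).
Proof.
move=> uv h; rewrite (H1normE (H1_deriv_eq_on uv h)); congr Num.sqrt.
apply: eq_Rintegral => x xI.
by rewrite /ReF /ImF uv //; move: xI; rewrite inE.
Qed.

Definition realC (r : R -> R) (x : R) : C := complex.Complex (r x) 0.

Lemma ReF_add_scale_realC (u : R -> C) (c : C) (r : R -> R) :
  ReF (fun x => u x + c * realC r x) = fun x => ReF u x + complex.Re c * r x.
Proof.
by apply/funext => x; rewrite /ReF /realC; case: (u x) => ? ?; case: c => ? ? /=;
  rewrite mulr0 subr0.
Qed.

Lemma ImF_add_scale_realC (u : R -> C) (c : C) (r : R -> R) :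
  ImF (fun x => u x + c * realC r x) = fun x => ImF u x + complex.Im c * r x.
Proof.
by apply/funext => x; rewrite /ImF /realC; case: (u x) => ? ?; case: c => ? ? /=;
  rewrite mulr0 add0r.
Qed.

Lemma ReF_scale_realC (c : C) (r : R -> R) :
  ReF (fun x => c * realC r x) = fun x => complex.Re c * r x.
Proof. by apply/funext => x; rewrite /ReF /realC; case: c => ? ? /=; rewrite mulr0 subr0. Qed.

Lemma ImF_scale_realC (c : C) (r : R -> R) :
  ImF (fun x => c * realC r x) = fun x => complex.Im c * r x.
Proof. by apply/funext => x; rewrite /ImF /realC; case: c => ? ? /=; rewrite mulr0 add0r. Qed.

Lemma H1_deriv_add_scale_realC {u g : R -> C} {f h : R -> R} (c : C) :
  H1_deriv u g -> H1r_deriv f h ->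
  H1_deriv (fun x => u x + c * realC f x) (fun x => g x + c * realC h x).
Proof.
move=> /H1_derivP[r i] fh; apply/H1_derivP.
rewrite !ReF_add_scale_realC !ImF_add_scale_realC.
by split; exact: H1r_deriv_add_scale.
Qed.

Lemma H1_deriv_scale_realC {f h : R -> R} (c : C) :
  H1r_deriv f h -> H1_deriv (fun x => c * realC f x) (fun x => c * realC h x).
Proof.
move=> fh; apply/H1_derivP; rewrite !ReF_scale_realC !ImF_scale_realC.
by split; exact: H1r_derivZ.
Qed.

Lemma Vth_eq_on {p a b t} {u v : R -> C} :
  {in `[0, 1], u =1 v} -> Vth p a b t u -> Vth p a b t v.
Proof.
move=> uv [[[g hg] u1] [g0 [hg0 hae]]].
have I0 : (0 : R) \in `[0, 1] by rewrite in_itv /= lexx ler01.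
have I1 : (1 : R) \in `[0, 1] by rewrite in_itv /= lexx ler01.
split; first split.
- by exists g; exact: H1_deriv_eq_on uv hg.
- by rewrite -!uv.
by exists g0; split => //; exact: H1_deriv_eq_on uv hg0.
Qed.

Lemma dist_le (N M : set (R -> C)) (B : R) : 0 <= B ->
  (forall u, N u -> H1norm u = 1 -> exists2 v, M v & H1norm (u - v) <= B) ->
  dist N M <= B.
Proof.
move=> B0 NM; rewrite /dist; set S := [set d | _].
have [[d Sd]|S0] := pselect (S !=set0); last first.
  by rewrite sup_out // => -[[d Sd] _]; apply: S0; exists d.
apply: ge_sup; first by exists d.
move=> _ [u [Nu [u1 ->]]]; have [v Mv uv] := NM u Nu u1.
apply: le_trans uv; apply: ge_inf; last by exists v.
by exists 0 => _ [w [_ ->]]; exact: H1norm_ge0.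
Qed.

Lemma sqnorm_expi2piB t1 t2 :
  sqnorm (expi2pi t2 - expi2pi t1) = 2 - 2 * cos (2 * pi * t2 - 2 * pi * t1).
Proof.
rewrite /sqnorm /expi2pi /= cosB.
have := cos2Dsin2 (2 * pi * t1); have := cos2Dsin2 (2 * pi * t2).
set c1 := cos (2 * pi * t1); set s1 := sin (2 * pi * t1).
set c2 := cos (2 * pi * t2); set s2 := sin (2 * pi * t2).
by move=> h2 h1; nra.
Qed.

Lemma expi2pi_sqnorm_near t1 {eta : R} : 0 < eta -> exists2 d : R, 0 < d &
  forall t2, `|t2 - t1| <= d -> sqnorm (expi2pi t2 - expi2pi t1) < eta.
Proof.
move=> eta0; have eta2 : 0 < eta / 2 by rewrite divr_gt0.
have [d d0 cos_near] : exists2 d : R, 0 < d &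
    forall y, `|y| < d -> 1 - cos y < eta / 2.
  have := @continuous_cos R 0.
  move/(@cvgrPdist_lt _ _ _ _ (nbhs_filter 0)) => /(_ _ eta2).
  rewrite cos0 => /nbhs_norm0P [d /= d0 hd].
  by exists d => // y /hd /= /(le_lt_trans (ler_norm _)).
have pi0 := pi_gt0 R.
exists (d / (4 * pi)); first by rewrite divr_gt0 // mulr_gt0.
move=> t2 t21; rewrite sqnorm_expi2piB.
suff : 1 - cos (2 * pi * t2 - 2 * pi * t1) < eta / 2 by lra.
apply: cos_near; rewrite -mulrBr normrM (ger0_norm (ltW (mulr_gt0 _ pi0))) //.
move: t21; rewrite ler_pdivlMr ?mulr_gt0 // => t21; lra.
Qed.

Section Ramp.
Variables (a b : R).
Hypothesis ab : a < b.

Definition ramp_deriv (x : R) : R := (b - a)^-1 * (\1_(`]a, b[%classic) x : R).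
Definition ramp (x : R) : R := Rintegral mu (`[0, x] : set R) ramp_deriv.

Lemma ramp_deriv_ge0 x : 0 <= ramp_deriv x.
Proof. by rewrite /ramp_deriv mulr_ge0 // invr_ge0 subr_ge0 ltW. Qed.

Lemma ramp_deriv_le x : `|ramp_deriv x| <= (b - a)^-1.
Proof.
rewrite ger0_norm ?ramp_deriv_ge0 // /ramp_deriv /indic; case: (_ \in _) => /=.
  by rewrite mulr1.
by rewrite mulr0 invr_ge0 subr_ge0 ltW.
Qed.

Lemma ramp_deriv_Q1 x : Q1 a b x -> ramp_deriv x = 0.
Proof.
rewrite /Q1 /ramp_deriv /indic /= => hx.
rewrite (_ : (x \in _) = false) ?mulr0 //.
apply/negP; rewrite inE /= in_itv /= => /andP[ax xb].
case: hx => /=; rewrite in_itv /= => /andP[h1 h2].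
  by have := lt_trans h2 ax; rewrite ltxx.
by have := lt_trans xb h1; rewrite ltxx.
Qed.

Lemma H1r_deriv_ramp : H1r_deriv ramp ramp_deriv.
Proof.
split; last by move=> x _; rewrite {2}/ramp set_itv1 Rintegral_set1 add0r.
apply: (bounded_L2r (b - a)^-1); last by move=> x _; exact: ramp_deriv_le.
apply: measurable_funM; first exact: measurable_cst.
by apply: measurable_indic; exact: measurable_itv.
Qed.

Lemma ramp0 : ramp 0 = 0.
Proof. by rewrite /ramp set_itv1 Rintegral_set1. Qed.

Hypotheses (a_gt0 : 0 < a) (b_lt1 : b < 1).

Lemma ramp1 : ramp 1 = 1.
Proof.
rewrite /ramp /ramp_deriv RintegralZl; first last.
- apply: (bounded_integrable_I01 1).
    by apply: measurable_indic; exact: measurable_itv.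
  by move=> x _; rewrite /indic; case: (_ \in _); rewrite ?normr1 ?normr0.
- exact: measurable_itv.
rewrite /Rintegral integral_indic; first last.
- exact: measurable_itv.
- exact: measurable_itv.
rewrite setIidl; last first.
  move=> x /=; rewrite !in_itv /= => /andP[h1 h2].
  by rewrite (ltW (lt_trans a_gt0 h1)) (ltW (lt_trans h2 b_lt1)).
have mu_ab : lebesgue_measure (`]a, b[%classic : set R) = (b - a)%:E.
  by rewrite lebesgue_measure_itv /= lte_fin ab -EFinB.
rewrite [X in fine X](_ : _ = (b - a)%:E); last exact: mu_ab.
by rewrite /= mulVf // subr_eq0 gt_eqF.
Qed.

Lemma ramp_le1 x : x \in `[0, 1] -> `|ramp x| <= 1.
Proof.
rewrite in_itv /= => /andP[x0 x1].
apply: le_trans (norm_Rintegral_itv0_le H1r_deriv_ramp.1 x1) _.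
rewrite -ramp1 /ramp le_eqVlt; apply/orP; left; apply/eqP.
by apply: eq_Rintegral => t _; rewrite ger0_norm ?ramp_deriv_ge0.
Qed.

(* Adding [k u(0) ramp] changes the quasi-periodicity factor [u(1)/u(0)] by [k]
   without touching [u] on [Q1], where [ramp] is constant. *)
Definition ramp_lift (k : C) (u : R -> C) : R -> C :=
  fun x => u x + k * u 0 * realC ramp x.

Lemma ramp_lift0 k u : ramp_lift k u 0 = u 0.
Proof. by rewrite /ramp_lift /realC ramp0 mulr0 addr0. Qed.

Lemma Vth_ramp_lift {p t1} t2 {u : R -> C} :
  Vth p a b t1 u -> Vth p a b t2 (ramp_lift (expi2pi t2 - expi2pi t1) u).
Proof.
set c := (expi2pi t2 - expi2pi t1) * u 0.
move=> [[[g hg] u1] [g0 [hg0 hae]]].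
have dramp := H1r_deriv_ramp.
split; first split.
- by exists (fun x => g x + c * realC ramp_deriv x);
    exact: H1_deriv_add_scale_realC.
- by rewrite /ramp_lift /realC ramp1 ramp0 u1 /c mulr1 mulr0 addr0; ring.
exists (fun x => g0 x + c * realC ramp_deriv x).
split; first exact: H1_deriv_add_scale_realC.
apply: filterS hae; first exact: (ae_filter_ringOfSetsType mu).
by move=> x hx Qx; rewrite /realC ramp_deriv_Q1 // mulr0 addr0; exact: hx.
Qed.

Lemma sum_ramp_lift k (n : nat) (c : 'I_n -> C) (u : 'I_n -> R -> C) x :
  \sum_(i < n) c i * ramp_lift k (u i) x =
  ramp_lift k (fun y => \sum_(i < n) c i * u i y) x.
Proof.
rewrite /ramp_lift; under eq_bigr do rewrite mulrDr.
rewrite big_split /=; congr (_ + _).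
by rewrite mulr_sumr !mulr_suml; apply: eq_bigr => i _; ring.
Qed.

Lemma span_ramp_lift k {n : nat} (u : 'I_n -> R -> C) (v : R -> C) :
  span_on (fun i => ramp_lift k (u i)) v <->
  exists2 w, span_on u w & {in `[0, 1], ramp_lift k w =1 v}.
Proof.
have I0 : (0 : R) \in `[0, 1] by rewrite in_itv /= lexx ler01.
split=> [[c hc]|[w [c hc] wv]].
  exists (fun y => \sum_(i < n) c i * u i y); first by exists c.
  by move=> x xI; rewrite hc // sum_ramp_lift.
by exists c => x xI; rewrite sum_ramp_lift -wv // /ramp_lift /= !hc.
Qed.

Lemma lin_indep_ramp_lift k (n : nat) (u : 'I_n -> R -> C) :
  lin_indep_on u -> lin_indep_on (fun i => ramp_lift k (u i)).
Proof.
move=> li c hc; have I0 : (0 : R) \in `[0, 1] by rewrite in_itv /= lexx ler01.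
have u0 : \sum_(i < n) c i * u i 0 = 0.
  by have := hc 0 I0; rewrite sum_ramp_lift ramp_lift0.
apply: li => x xI.
by have := hc x xI; rewrite sum_ramp_lift /ramp_lift u0 mulr0 mul0r addr0.
Qed.

Lemma H1norm_scale_ramp_le {c : C} {v : R -> C} :
  {in `[0, 1], (fun x => c * realC ramp x) =1 v} ->
  H1norm v <= Num.sqrt (sqnorm c * (1 + (b - a)^-1 ^+ 2)).
Proof.
have dramp := H1_deriv_scale_realC c H1r_deriv_ramp.
move=> cv; rewrite (H1norm_eq_on cv dramp); apply: ler_wsqrtr.
set K := sqnorm c * _.
have -> : K = Rintegral mu (@I01 R) (fun _ => K).
  rewrite Rintegral_cst; last exact: measurable_I01.
  by rewrite [X in fine X](_ : _ = 1%:E) ?mulr1 //; exact: lebesgue_measure_I01.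
apply: le_Rintegral.
- exact: measurable_I01.
- exact: H1energy_integrable dramp.
- exact: integrable_cst_I01.
have sq_le (y M : R) : `|y| <= M -> y ^+ 2 <= M ^+ 2.
  move=> yM; rewrite -real_normK ?num_real //.
  by apply: lerXn2r; rewrite // nnegrE (le_trans _ yM).
have pointwise (r d : R) : r ^+ 2 <= 1 -> d ^+ 2 <= (b - a)^-1 ^+ 2 ->
    (complex.Re c * r) ^+ 2 + (complex.Im c * r) ^+ 2 +
    (complex.Re c * d) ^+ 2 + (complex.Im c * d) ^+ 2 <= K.
  move=> r1 d2; rewrite /K /sqnorm !exprMn.
  have := ler_wpM2l (sqr_ge0 (complex.Re c)) r1.
  have := ler_wpM2l (sqr_ge0 (complex.Im c)) r1.
  have := ler_wpM2l (sqr_ge0 (complex.Re c)) d2.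
  have := ler_wpM2l (sqr_ge0 (complex.Im c)) d2.
  lra.
move=> x Ix; rewrite !ReF_scale_realC !ImF_scale_realC; apply: pointwise.
  by rewrite -(expr1n _ 2); apply: sq_le; rewrite ramp_le1 // in_itv /=; exact/I01P.
exact: sq_le (ramp_deriv_le x).
Qed.

(* [v] is constant on [(0, a)] since [v'] vanishes on [Q1]. *)
Lemma Vth_sqnorm0_le {p t} {v : R -> C} : (forall x, 0 < p x) ->
  Vth p a b t v -> a * sqnorm (v 0) <= H1norm v ^+ 2.
Proof.
move=> p_gt0 [_ [g [vg hae]]].
have a1 : a <= 1 by rewrite ltW // (lt_trans ab b_lt1).
have [r i] := H1_derivP.1 vg.
have g0 : {ae mu, forall y, `]0, a[%classic y -> ReF g y = 0 /\ ImF g y = 0}.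
  apply: filterS hae; first exact: (ae_filter_ringOfSetsType mu).
  move=> y hy ya; have /eqP := hy (or_introl ya).
  rewrite mulf_eq0 => /orP[/eqP[] p0|/eqP gy]; last by rewrite /ReF /ImF gy.
  by have := p_gt0 y; rewrite p0 ltxx.
have cstR : forall x, 0 < x < a -> ReF v x = ReF v 0.
  apply: H1r_deriv_cst_on a1 r _; apply: filterS g0.
  - exact: (ae_filter_ringOfSetsType mu).
  - by move=> y h /h[].
have cstI : forall x, 0 < x < a -> ImF v x = ImF v 0.
  apply: H1r_deriv_cst_on a1 i _; apply: filterS g0.
  - exact: (ae_filter_ringOfSetsType mu).
  - by move=> y h /h[].
set F := fun x => ReF v x ^+ 2 + ImF v x ^+ 2 + ReF g x ^+ 2 + ImF g x ^+ 2.
have F0 x : 0 <= F x by rewrite /F !addr_ge0 // sqr_ge0.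
have mA : measurable (`]0, a[%classic : set T) by exact: measurable_itv.
have AI : `]0, a[%classic `<=` @I01 R.
  move=> y /=; rewrite /I01 /= !in_itv /= => /andP[y0 ya].
  by rewrite (ltW y0) (le_trans (ltW ya) a1).
have iF : mu.-integrable (@I01 R) (EFin \o F) by exact: H1energy_integrable vg.
have mu_A : lebesgue_measure (`]0, a[%classic : set R) = a%:E.
  by rewrite lebesgue_measure_itv /= lte_fin a_gt0 -EFinB subr0.
have -> : a * sqnorm (v 0) = Rintegral mu `]0, a[%classic (fun _ => sqnorm (v 0)).
  by rewrite Rintegral_cst // [X in fine X](_ : _ = a%:E) // mulrC.
rewrite (H1normE vg) sqr_sqrtr; last by apply: Rintegral_ge0 => x _; exact: F0.
apply: (le_trans _ (ge0_subset_Rintegral mA measurable_I01 AI iF (fun x _ => F0 x))).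
apply: le_Rintegral => //.
- exact: (integrableS measurable_I01 mA AI (integrable_cst_I01 _)).
- exact: (integrableS measurable_I01 mA AI iF).
move=> x /=; rewrite in_itv /= => xa.
rewrite /F /sqnorm -[complex.Re (v 0)]/(ReF v 0) -[complex.Im (v 0)]/(ImF v 0).
rewrite -(cstR x xa) -(cstI x xa).
by have := sqr_ge0 (ReF g x); have := sqr_ge0 (ImF g x); lra.
Qed.

Lemma H1norm_scale_ramp_unit_le {p t} {k : C} {w v : R -> C} :
  (forall x, 0 < p x) -> Vth p a b t w -> H1norm w = 1 ->
  {in `[0, 1], (fun x => k * w 0 * realC ramp x) =1 v} ->
  H1norm v <= Num.sqrt (sqnorm k * (1 + (b - a)^-1 ^+ 2) / a).
Proof.
move=> p_gt0 Vw w1 wv; apply: le_trans (H1norm_scale_ramp_le wv) _.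
apply: ler_wsqrtr; rewrite sqnormM.
have := Vth_sqnorm0_le p_gt0 Vw; rewrite w1 expr1n => aw.
have w0 : sqnorm (w 0) <= a^-1 by rewrite -[a^-1]mulr1 ler_pdivlMl.
have kK : 0 <= sqnorm k * (1 + (b - a)^-1 ^+ 2).
  by rewrite mulr_ge0 ?sqnorm_ge0 // addr_ge0 // sqr_ge0.
by have := ler_wpM2l kK w0; lra.
Qed.

Lemma span_ramp_lift_Vth {p t1 t2} {n : nat} {u : 'I_n -> R -> C} :
  span_on u `<=` Vth p a b t1 ->
  span_on (fun i => ramp_lift (expi2pi t2 - expi2pi t1) (u i)) `<=` Vth p a b t2.
Proof.
move=> uV v /span_ramp_lift[w uw wv].
exact: Vth_eq_on wv (Vth_ramp_lift t2 (uV _ uw)).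
Qed.

Lemma dist_span_ramp_lift_le p t1 t2 (n : nat) (u : 'I_n -> R -> C) :
  (forall x, 0 < p x) -> span_on u `<=` Vth p a b t1 ->
  dist (span_on u) (span_on (fun i => ramp_lift (expi2pi t2 - expi2pi t1) (u i)))
  <= Num.sqrt (sqnorm (expi2pi t2 - expi2pi t1) * (1 + (b - a)^-1 ^+ 2) / a).
Proof.
set k := expi2pi t2 - expi2pi t1.
move=> p_gt0 uV; apply: dist_le => [|w uw w1]; first exact: sqrtr_ge0.
exists (ramp_lift k w); first by apply/span_ramp_lift; exists w.
rewrite -sqnormN; apply: H1norm_scale_ramp_unit_le p_gt0 (uV _ uw) w1 _ => x _.
by rewrite !fctE /ramp_lift; ring.
Qed.

Lemma dist_ramp_lift_span_le p t1 t2 (n : nat) (u : 'I_n -> R -> C) :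
  (forall x, 0 < p x) -> span_on u `<=` Vth p a b t1 ->
  dist (span_on (fun i => ramp_lift (expi2pi t2 - expi2pi t1) (u i))) (span_on u)
  <= Num.sqrt (sqnorm (expi2pi t2 - expi2pi t1) * (1 + (b - a)^-1 ^+ 2) / a).
Proof.
set k := expi2pi t2 - expi2pi t1.
move=> p_gt0 uV; apply: dist_le => [|v lv v1]; first exact: sqrtr_ge0.
have I0 : (0 : R) \in `[0, 1] by rewrite in_itv /= lexx ler01.
have [w uw wv] := (span_ramp_lift k u v).1 lv.
have Vv : Vth p a b t2 v := span_ramp_lift_Vth uV v lv.
exists w => //; apply: H1norm_scale_ramp_unit_le p_gt0 Vv v1 _ => x xI.
by rewrite !fctE -!wv // ramp_lift0 /ramp_lift; ring.
Qed.

End Ramp.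

End Quasiperiodic_H1.

Theorem proposition5p1 (R : realType) (p : R -> R) (hp : coeff_ok p)
  (alpha beta : R) (hab : 0 < alpha /\ alpha < beta /\ beta < 1)
  (theta1 : R) (ht1 : 0 <= theta1 < 1)
  (k : nat) (F1 : set (R -> complex.complex R))
  (hF1 : subspace_dim F1 k) (hF1V : F1 `<=` Vth p alpha beta theta1) :
  forall eps : R, 0 < eps ->
  exists delta : R, 0 < delta /\
    forall theta2 : R, 0 <= theta2 < 1 -> `|theta2 - theta1| <= delta ->
      exists F2 : set (R -> complex.complex R),
        subspace_dim F2 k /\ F2 `<=` Vth p alpha beta theta2 /\
        Num.max (dist F1 F2) (dist F2 F1) < eps.
Proof.
move=> eps eps_gt0.
have p_gt0 : forall x, 0 < p x by case: hp => _ [_ []].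
case: hab => a_gt0 [ab b_lt1].
case: hF1 => u [u_indep F1E]; rewrite {}F1E in hF1V *.
set K := 1 + (beta - alpha)^-1 ^+ 2.
have K_gt0 : 0 < K by rewrite ltr_pwDl ?sqr_ge0.
have [delta delta_gt0 near] := expi2pi_sqnorm_near theta1
  (divr_gt0 (mulr_gt0 (exprn_gt0 2 eps_gt0) a_gt0) K_gt0).
exists delta; split => // theta2 _ t21.
set lu := fun i => ramp_lift alpha beta (expi2pi theta2 - expi2pi theta1) (u i).
exists (span_on lu); split; first by exists lu; split => //; exact: lin_indep_ramp_lift.
split; first exact: span_ramp_lift_Vth.
have bound : Num.sqrt (sqnorm (expi2pi theta2 - expi2pi theta1) * K / alpha) < eps.
  rewrite -(ger0_norm (ltW eps_gt0)) -sqrtr_sqr ltr_sqrt ?exprn_gt0 //.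
  have := near theta2 t21; rewrite ltr_pdivlMr //.
  by rewrite ltr_pdivrMr.
rewrite gt_max; apply/andP; split; apply: le_lt_trans bound.
- exact: dist_span_ramp_lift_le.
- exact: dist_ramp_lift_span_le.
Qed.
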